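(* Let $\mathfrak{s}=\bigoplus\mathfrak{s}^p$ be a grading of depth one of a simple Lie superalgebra. Any graded subalgebra $\mathfrak{s}\subset\mathfrak{g}\subset\mathrm{der}(\mathfrak{s})$ is of the form $\mathfrak{g}=\mathfrak{s}\rtimes F$ for some graded subalgebra $F=\mathfrak{g}\cap\mathrm{out}(\mathfrak{s})$ of $\mathrm{out}(\mathfrak{s})$ and it is a transitive nonlinear $\mathbb{Z}$-graded Lie superalgebra. Moreover it is of depth one and irreducible if and only if the depth $d(F)\leq 0$ (i.e. $F$ is graded in nonnegative degrees).
   Context: $\mathfrak{s}$ is a finite-dimensional complex simple Lie superalgebra, $\mathrm{der}(\mathfrak{s})=\mathfrak{s}\rtimes\mathrm{out}(\mathfrak{s})$ (semidirect sum, $\mathfrak{s}$ the ideal, $\mathrm{out}(\mathfrak{s})$ a subalgebra of outer derivations, stable under the grading), with the grading induced by that of $\mathfrak{s}$. A $\mathbb{Z}$-graded Lie superalgebra $\mathfrak{g}=\bigoplus\mathfrak{g}^p$ is transitive if $x\in\mathfrak{g}^p$, $p\ge0$, $[x,\mathfrak{g}^{-1}]=0$ implies $x=0$; irreducible if $\mathfrak{g}^0$ acts irreducibly on $\mathfrak{g}^{-1}$; nonlinear if $\mathfrak{g}^1\neq0$. *)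

From HB Require Import structures.
From mathcomp Require Import all_boot all_order all_algebra.
From mathcomp.real_closed Require Export complex.
From mathcomp Require Export reals.
Set Implicit Arguments. Unset Strict Implicit. Unset Printing Implicit Defensive.
Import Order.TTheory GRing.Theory Num.Theory.
Local Open Scope ring_scope.

(* A Lie superalgebra structure on a finite-dimensional C-vector space V is
   given by a parity splitting V = V0 (+) V1 and the adjoint map
   ad : V -> End(V), so that the bracket is [x, y] := ad x y (bilinear). *)
Section LieSuper.
Variables (C : fieldType) (V : vectType C).
Variables (V0 V1 : {vspace V}) (ad : 'Hom(V, 'End(V))).

Definition par (a : bool) : {vspace V} := if a then V1 else V0.
Definition sgn (a b : bool) : C := (-1) ^+ (a && b).

Definition is_lie_superalgebra : Prop :=
  [/\ directv (V0 + V1)%VS, (V0 + V1)%VS = fullv,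
      (forall a b x y, x \in par a -> y \in par b -> ad x y \in par (a (+) b)),
      (forall a b x y, x \in par a -> y \in par b ->
          ad x y = - (sgn a b *: ad y x)) &
      (forall a b x y z, x \in par a -> y \in par b ->
          ad x (ad y z) = ad (ad x y) z + sgn a b *: ad y (ad x z))].

Definition graded_ideal (I : {vspace V}) : Prop :=
  I = (I :&: V0 + I :&: V1)%VS /\ (forall x y, y \in I -> ad x y \in I).

Definition simple_lie_superalgebra : Prop :=
  [/\ is_lie_superalgebra, (exists x y, ad x y != 0) &
      forall I, graded_ideal I -> I = 0%VS \/ I = fullv].

Definition Zgrading (gr : int -> {vspace V}) : Prop :=
  [/\ exists N : nat, [/\ forall p, (N < `|p|)%N -> gr p = 0%VS,
         (\sum_(i < N.*2.+1) gr (i%:Z - N%:Z))%VS = fullv &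
         directv (\sum_(i < N.*2.+1) gr (i%:Z - N%:Z))%VS],
      (forall p, gr p = (gr p :&: V0 + gr p :&: V1)%VS) &
      (forall p q x y, x \in gr p -> y \in gr q -> ad x y \in gr (p + q))].

Definition depth_one_grading (gr : int -> {vspace V}) : Prop :=
  (forall p, p < -1 -> gr p = 0%VS) /\ gr (-1) != 0%VS.

Definition P0 : 'End(V) := daddv_pi V0 V1.
Definition P1 : 'End(V) := daddv_pi V1 V0.
Definition evpart (D : 'End(V)) : 'End(V) :=
  (P0 \o D \o P0)%VF + (P1 \o D \o P1)%VF.
Definition odpart (D : 'End(V)) : 'End(V) :=
  (P0 \o D \o P1)%VF + (P1 \o D \o P0)%VF.

(* the supercommutator on End(V), extended bilinearly from homogeneous parts *)
Definition sbr (D E : 'End(V)) : 'End(V) :=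
  ((evpart D \o evpart E)%VF - (evpart E \o evpart D)%VF) +
  ((evpart D \o odpart E)%VF - (odpart E \o evpart D)%VF) +
  ((odpart D \o evpart E)%VF - (evpart E \o odpart D)%VF) +
  ((odpart D \o odpart E)%VF + (odpart E \o odpart D)%VF).

Definition superder (c : bool) (D : 'End(V)) : Prop :=
  (forall a x, x \in par a -> D x \in par (c (+) a)) /\
  (forall a x y, x \in par a ->
     D (ad x y) = ad (D x) y + sgn c a *: ad x (D y)).

Definition is_der (D : 'End(V)) : Prop :=
  superder false (evpart D) /\ superder true (odpart D).

Variable gr : int -> {vspace V}.

Definition derdeg (p : int) (D : 'End(V)) : Prop :=
  forall q x, x \in gr q -> D x \in gr (q + p).

Definition Z2graded (W : {vspace 'End(V)}) : Prop :=
  forall D, D \in W -> evpart D \in W.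

Definition Zgraded (W : {vspace 'End(V)}) : Prop :=
  forall D, D \in W -> exists (M : nat) (c : int -> 'End(V)),
    D = \sum_(i < M.*2.+1) c (i%:Z - M%:Z) /\
    forall p, c p \in W /\ derdeg p (c p).

Definition subalg (W : {vspace 'End(V)}) : Prop :=
  forall D E, D \in W -> E \in W -> sbr D E \in W.

Definition graded_subalg (W : {vspace 'End(V)}) : Prop :=
  [/\ Z2graded W, Zgraded W & subalg W].

(* out(s): a graded subalgebra with der(s) = ad(s) (+) out(s) *)
Definition outer_complement (out : {vspace 'End(V)}) : Prop :=
  [/\ forall D, is_der D <-> exists x o, o \in out /\ D = ad x + o,
      (limg ad :&: out = 0)%VS & graded_subalg out].

Definition transitive_sub (g : {vspace 'End(V)}) : Prop :=
  forall p D, 0 <= p -> D \in g -> derdeg p D ->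
    (forall E, E \in g -> derdeg (-1) E -> sbr D E = 0) -> D = 0.

Definition nonlinear_sub (g : {vspace 'End(V)}) : Prop :=
  exists D, [/\ D \in g, derdeg 1 D & D != 0].

Definition depth_one_sub (g : {vspace 'End(V)}) : Prop :=
  (forall p D, p < -1 -> D \in g -> derdeg p D -> D = 0) /\
  exists D, [/\ D \in g, derdeg (-1) D & D != 0].

(* g^0 acts irreducibly on g^{-1}: g^{-1} <> 0 and its only g^0-stable
   graded subspaces are 0 and g^{-1} *)
Definition irreducible_sub (g : {vspace 'End(V)}) : Prop :=
  (exists D, [/\ D \in g, derdeg (-1) D & D != 0]) /\
  forall W : {vspace 'End(V)},
    (forall D, D \in W -> D \in g /\ derdeg (-1) D) ->
    Z2graded W ->
    (forall X D, X \in g -> derdeg 0 X -> D \in W -> sbr X D \in W) ->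
    W = 0%VS \/ (forall D, D \in g -> derdeg (-1) D -> D \in W).

End LieSuper.

From HB Require Import structures.
From mathcomp Require Import all_boot all_order all_algebra.
From mathcomp.real_closed Require Import complex.
From mathcomp Require Import reals.
From mathcomp Require Import zify.
Set Implicit Arguments. Unset Strict Implicit. Unset Printing Implicit Defensive.
Import Order.TTheory GRing.Theory Num.Theory.
Local Open Scope ring_scope.

(** The inner derivations ad(s) form an ideal of der(s) complemented by out(s), which
    gives g = ad(s) (+) F with F = g :&: out(s), a graded subalgebra.  Everything else
    comes from the simplicity of s through one device: a Z2-graded subspace A of s with
    [s^-1, A] <= A generates under s^{>=0} a graded ideal of s (by the Jacobi identity, since
    [s^-1, s^{>=0}] <= s^-1 + s^{>=0}), so either A = 0 or every s^{>=0}-stable subspace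
    containing A is all of s.  Applied to {v in s^{>=0} | [s^-1, v] = 0} this is the
    transitivity of s, which propagates degree by degree to derivations of nonnegative
    degree killing s^-1, hence to g; applied to a g^0-stable subspace of s^-1 it is the
    irreducibility of s^-1; and if s^1 were 0, transitivity would kill every positive
    degree and make s^-1 a proper ideal.  Finally, a homogeneous element of g of negative
    degree p is inner as soon as F has no component of degree p, which yields the
    criterion for depth one and irreducibility. *)

Section GradedLieSuperalgebra.

Variables (K : fieldType) (V : vectType K) (V0 V1 : {vspace V}).

Local Notation P0 := (P0 V0 V1).
Local Notation P1 := (P1 V0 V1).
Local Notation evpart := (evpart V0 V1).
Local Notation odpart := (odpart V0 V1).

Variables (gr : int -> {vspace V}) (N : nat).
Hypotheses (gr_bound : forall p : int, (N < `|p|)%N -> gr p = 0%VS)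
  (gr_sum : (\sum_(i < N.*2.+1) gr (i%:Z - N%:Z))%VS = fullv)
  (gr_direct : directv (\sum_(i < N.*2.+1) gr (i%:Z - N%:Z))).

Let gr_full : fullv = (\sum_(i | xpredT i) gr ((i : 'I_N.*2.+1)%:Z - N%:Z))%VS :=
  esym gr_sum.

Definition grproj (p : int) : 'End(V) :=
  if [pick i : 'I_N.*2.+1 | i%:Z - N%:Z == p] is Some i then sumv_pi_for gr_full i else 0.

Lemma grproj_mem p v : grproj p v \in gr p.
Proof.
rewrite /grproj; case: pickP => [i /eqP <- | _]; first exact: memv_sum_pi.
by rewrite lfunE mem0v.
Qed.

Lemma memv_gr_eq0 q v : (N < `|q|)%N -> v \in gr q -> v = 0.
Proof. by move/gr_bound ->; rewrite memv0 => /eqP. Qed.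

Let sumv_pi_gr (i j : 'I_N.*2.+1) v :
  v \in gr (j%:Z - N%:Z) -> sumv_pi_for gr_full i v = if i == j then v else 0.
Proof.
move=> v_j; have /directv_sum_unique uniq_dec := gr_direct.
have := uniq_dec (fun i => sumv_pi_for gr_full i v) (fun i => if i == j then v else 0).
rewrite (sumv_pi_sum gr_full (memvf v)) -big_mkcond big_pred1_eq eqxx.
move=> /(_ (fun i _ => memv_sum_pi _ i v)) /=.
have vs_mem k : xpredT k -> (if k == j then v else 0) \in gr (k%:Z - N%:Z).
  by case: eqP => [-> | _]; rewrite ?mem0v.
by move=> /(_ vs_mem) /esym /forallP /(_ i) /eqP.
Qed.

Lemma grproj_id q v : v \in gr q -> forall p, grproj p v = if p == q then v else 0.
Proof.
move=> v_q p; have [q_small | q_large] := leqP `|q| N; last first.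
  by rewrite (memv_gr_eq0 q_large v_q) linear0; case: eqP.
have iq_lt : (absz (q + N%:Z)%R < N.*2.+1)%N by lia.
have def_q : (Ordinal iq_lt)%:Z - N%:Z = q by rewrite /=; lia.
rewrite /grproj; case: pickP => [i /eqP def_p | no_p]; last first.
  by rewrite lfunE; case: eqP => // p_q; have := no_p (Ordinal iq_lt); rewrite def_q p_q eqxx.
rewrite (@sumv_pi_gr i (Ordinal iq_lt)) ?def_q // -def_p -{2}def_q.
by congr (if _ then _ else _); apply/eqP/eqP => [-> | ij]; last (apply/val_inj => /=; lia).
Qed.

Lemma grproj_sum v : \sum_(i < N.*2.+1) grproj (i%:Z - N%:Z) v = v.
Proof.
rewrite -[RHS](sumv_pi_sum gr_full (memvf v)); apply: eq_bigr => i _.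
rewrite /grproj; case: pickP => [j /eqP ji | /(_ i)]; last by rewrite eqxx.
by have -> : j = i by apply/val_inj => /=; lia.
Qed.

Definition hcomp (p : int) (E : 'End(V)) : 'End(V) :=
  \sum_(i < N.*2.+1) (grproj (i%:Z - N%:Z + p) \o E \o grproj (i%:Z - N%:Z))%VF.

Lemma hcomp_derdeg p E : derdeg gr p (hcomp p E).
Proof.
move=> q v v_q; rewrite sum_lfunE; apply: rpred_sum => i _.
rewrite !comp_lfunE (grproj_id v_q); case: eqP => [-> | _]; first exact: grproj_mem.
by rewrite !linear0 mem0v.
Qed.

Lemma hcomp_id p q E : derdeg gr q E -> hcomp p E = if q == p then E else 0.
Proof.
move=> E_q; apply/lfunP => v; rewrite sum_lfunE.
under eq_bigr do rewrite !comp_lfunE (grproj_id (E_q _ _ (grproj_mem _ v))).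
have [<- | ne_qp] := eqVneq q p.
  by rewrite -[in RHS](grproj_sum v) linear_sum; apply: eq_bigr => i _; rewrite eqxx.
by rewrite lfunE big1 // => i _; case: eqP => // /eqP; move/eqP: ne_qp; lia.
Qed.

Lemma hcompD p : {morph hcomp p : E F / E + F}.
Proof.
move=> E F; apply/lfunP => v; rewrite add_lfunE !sum_lfunE -big_split.
by apply: eq_bigr => i _; rewrite !comp_lfunE add_lfunE linearD.
Qed.

Lemma hcomp_sum p I (r : seq I) (P : pred I) (F : I -> 'End(V)) :
  hcomp p (\sum_(i <- r | P i) F i) = \sum_(i <- r | P i) hcomp p (F i).
Proof.
have hcomp0 : hcomp p 0 = 0.
  apply/lfunP => v; rewrite sum_lfunE lfunE.
  by apply: big1 => i _; rewrite !comp_lfunE lfunE linear0.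
exact: (big_morph _ (hcompD p) hcomp0).
Qed.

Lemma Zgraded_hcomp (W : {vspace 'End(V)}) p D : Zgraded gr W -> D \in W -> hcomp p D \in W.
Proof.
move=> W_gr DW; have [M [c [-> c_deg]]] := W_gr D DW.
rewrite hcomp_sum; apply: rpred_sum => i _; rewrite (hcomp_id _ (c_deg _).2).
by case: eqP => _; [exact: (c_deg _).1 | exact: mem0v].
Qed.

Lemma Zgraded_cap (W W' : {vspace 'End(V)}) :
  Zgraded gr W -> Zgraded gr W' -> Zgraded gr (W :&: W').
Proof.
move=> W_gr W'_gr D; rewrite memv_cap => /andP[DW DW'].
have [M [c [def_D c_deg]]] := W'_gr D DW'.
exists M, (hcomp ^~ D); split=> [|p]; last first.
  by split; [rewrite memv_cap !Zgraded_hcomp | exact: hcomp_derdeg].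
rewrite {1}def_D; apply: eq_bigr => i _; rewrite def_D hcomp_sum (bigD1 i) //=.
rewrite (hcomp_id _ (c_deg _).2) eqxx big1 ?addr0 // => j ne_ji.
by rewrite (hcomp_id _ (c_deg _).2); case: eqP => // /eqP; move: ne_ji; rewrite -val_eqE /=; lia.
Qed.

Lemma graded_subalg_cap (W W' : {vspace 'End(V)}) :
  graded_subalg V0 V1 gr W -> graded_subalg V0 V1 gr W' -> graded_subalg V0 V1 gr (W :&: W').
Proof.
case=> [W_ev W_gr W_sub] [W'_ev W'_gr W'_sub]; split.
- by move=> D; rewrite !memv_cap => /andP[DW DW']; rewrite W_ev ?W'_ev.
- exact: Zgraded_cap.
- by move=> D E; rewrite !memv_cap => /andP[DW DW'] /andP[EW EW']; rewrite W_sub ?W'_sub.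
Qed.

Definition depth_nonpos (W : {vspace 'End(V)}) :=
  forall p D, p < 0 -> D \in W -> derdeg gr p D -> D = 0.

Definition grpos : {vspace V} := (\sum_(i < N.+1) gr i%:Z)%VS.

Lemma grpos_mem q v : 0 <= q -> v \in gr q -> v \in grpos.
Proof.
move=> q_ge0 v_q; have [q_small | q_large] := leqP `|q| N; last first.
  by rewrite (memv_gr_eq0 q_large v_q) mem0v.
have q_lt : (`|q| < N.+1)%N by [].
apply: subvP v_q; apply: (sumv_sup (Ordinal q_lt)) => //=.
by rewrite gez0_abs.
Qed.

Hypothesis gr_lt_neg1 : forall p, p < -1 -> gr p = 0%VS.

Lemma gr_neg1_add_grpos : (gr (-1) + grpos)%VS = fullv.
Proof.
apply/eqP; rewrite eqEsubv subvf -gr_sum /=; apply/subv_sumP => i _.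
have [lt_i | ge_i] := ltrP (i%:Z - N%:Z) (-1); first by rewrite gr_lt_neg1 ?sub0v.
have [-> | ne_i] := eqVneq (i%:Z - N%:Z) (-1); first exact: addvSl.
apply: subv_trans (addvSr _ _); apply/subvP => v; apply: grpos_mem.
by move: ge_i ne_i; lia.
Qed.

Lemma gr_neg1_cap_grpos : (gr (-1) :&: grpos = 0)%VS.
Proof.
apply/eqP; rewrite -subv0; apply/subvP => v; rewrite memv_cap memv0.
case/andP=> v_neg1 /memv_sumP[vs vs_gr def_v].
have := grproj_id v_neg1 (-1); rewrite eqxx => <-.
rewrite def_v linear_sum /= big1 // => i _.
by rewrite (grproj_id (vs_gr i isT)); case: eqP => // /eqP; lia.
Qed.

Lemma gr_neg1_grpos_decomp x : exists u t, [/\ u \in gr (-1), t \in grpos & x = u + t].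
Proof.
have /memv_addP[u u_neg [t t_pos ->]] : x \in (gr (-1) + grpos)%VS.
  by rewrite gr_neg1_add_grpos memvf.
by exists u, t.
Qed.

Hypotheses (V01_direct : directv (V0 + V1)) (V01_full : (V0 + V1)%VS = fullv).

Lemma V01_cap0 : (V0 :&: V1 = 0)%VS.
Proof. exact/directv_addP. Qed.

Lemma P0_mem v : P0 v \in V0. Proof. exact: memv_pi. Qed.
Lemma P1_mem v : P1 v \in V1. Proof. exact: memv_pi. Qed.

Lemma P0_id u : u \in V0 -> P0 u = u. Proof. exact: daddv_pi_id V01_cap0. Qed.
Lemma P1_id u : u \in V1 -> P1 u = u.
Proof. by apply: daddv_pi_id; rewrite capvC V01_cap0. Qed.

Lemma P0_add_P1 v : P0 v + P1 v = v.
Proof. by apply: daddv_pi_add V01_cap0 _; rewrite V01_full memvf. Qed.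

Lemma P0_odd u : u \in V1 -> P0 u = 0.
Proof.
by move=> u1; have := P0_add_P1 u; rewrite P1_id // => /(canRL (addrK u)); rewrite subrr.
Qed.

Lemma P1_even u : u \in V0 -> P1 u = 0.
Proof.
by move=> u0; have := P0_add_P1 u; rewrite P0_id // => /(canRL (addKr u)); rewrite addNr.
Qed.

Definition parity_stable (W : {vspace V}) := forall w, w \in W -> P0 w \in W.

Lemma parity_stable_P1 W w : parity_stable W -> w \in W -> P1 w \in W.
Proof. by move=> W_st w_W; rewrite -(addKr (P0 w) (P1 w)) P0_add_P1 memvD ?memvN ?W_st. Qed.

Lemma parity_stableP W : parity_stable W <-> W = (W :&: V0 + W :&: V1)%VS.
Proof.
split=> [W_st | ->].
  apply/eqP; rewrite eqEsubv subv_add !capvSl !andbT; apply/subvP => w w_W.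
  by rewrite -(P0_add_P1 w) memv_add // memv_cap ?P0_mem ?P1_mem ?W_st ?parity_stable_P1.
move=> _ /memv_addP[u + [v + ->]]; rewrite !memv_cap => /andP[uW u0] /andP[vW v1].
by rewrite linearD /= P0_id // P0_odd // addr0 (subvP (addvSl _ _)) // memv_cap uW.
Qed.

Lemma parity_stable0 : parity_stable 0.
Proof. by move=> w; rewrite memv0 => /eqP ->; rewrite linear0 mem0v. Qed.

Lemma parity_stable_cap W W' : parity_stable W -> parity_stable W' -> parity_stable (W :&: W').
Proof. by move=> W_st W'_st w; rewrite !memv_cap => /andP[wW wW']; rewrite W_st ?W'_st. Qed.

Lemma evpart_even (E : 'End(V)) :
  (forall u, u \in V0 -> E u \in V0) -> (forall u, u \in V1 -> E u \in V1) ->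
  evpart E = E /\ odpart E = 0.
Proof.
move=> E0 E1; split; apply/lfunP => v; rewrite !add_lfunE !comp_lfunE.
  by rewrite (P0_id (E0 _ (P0_mem v))) (P1_id (E1 _ (P1_mem v))) -linearD P0_add_P1.
by rewrite (P0_odd (E1 _ (P1_mem v))) (P1_even (E0 _ (P0_mem v))) addr0 lfunE.
Qed.

Lemma evpart_odd (E : 'End(V)) :
  (forall u, u \in V0 -> E u \in V1) -> (forall u, u \in V1 -> E u \in V0) ->
  evpart E = 0 /\ odpart E = E.
Proof.
move=> E0 E1; split; apply/lfunP => v; rewrite !add_lfunE !comp_lfunE.
  by rewrite (P0_odd (E0 _ (P0_mem v))) (P1_even (E1 _ (P1_mem v))) addr0 lfunE.
by rewrite (P0_id (E1 _ (P1_mem v))) (P1_id (E0 _ (P0_mem v))) addrC -linearD P0_add_P1.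
Qed.

Lemma evpartD (E F : 'End(V)) : evpart (E + F) = evpart E + evpart F.
Proof. by apply/lfunP => v; rewrite !add_lfunE !comp_lfunE !add_lfunE !linearD addrACA. Qed.

Lemma evpart_add_odpart (E : 'End(V)) : evpart E + odpart E = E.
Proof.
apply/lfunP => v; rewrite !add_lfunE !comp_lfunE.
have -> : E v = P0 (E (P0 v)) + P1 (E (P0 v)) + (P0 (E (P1 v)) + P1 (E (P1 v))).
  by rewrite !P0_add_P1 -linearD P0_add_P1.
by rewrite addrACA [RHS]addrACA [P1 (E (P1 v)) + _]addrC.
Qed.

Variable ad : 'Hom(V, 'End(V)).
Hypothesis ad_par : forall a b x y, x \in par V0 V1 a -> y \in par V0 V1 b ->
  ad x y \in par V0 V1 (a (+) b).
Hypothesis ad_jacobi : forall a b x y z, x \in par V0 V1 a -> y \in par V0 V1 b ->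
  ad x (ad y z) = ad (ad x y) z + sgn K a b *: ad y (ad x z).
Arguments ad_par a b {x} y.
Arguments ad_jacobi a b {x y} z.

Lemma sgn_neq0 a b : sgn K a b != 0.
Proof. by rewrite /sgn signr_eq0. Qed.

Lemma adDl x y z : ad (x + y) z = ad x z + ad y z.
Proof. by rewrite linearD add_lfunE. Qed.

Lemma ad0l z : ad 0 z = 0.
Proof. by rewrite linear0 lfunE. Qed.

Lemma ad_suml I (r : seq I) (P : pred I) (F : I -> V) z :
  ad (\sum_(i <- r | P i) F i) z = \sum_(i <- r | P i) ad (F i) z.
Proof. by rewrite linear_sum sum_lfunE. Qed.

Lemma ad_split x : ad x = ad (P0 x) + ad (P1 x).
Proof. by rewrite -linearD P0_add_P1. Qed.

Lemma evpart_ad x : evpart (ad x) = ad (P0 x).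
Proof.
have [ev0 _] := evpart_even (ad_par false false ^~ (P0_mem x))
  (ad_par false true ^~ (P0_mem x)).
have [ev1 _] := evpart_odd (ad_par true false ^~ (P1_mem x))
  (ad_par true true ^~ (P1_mem x)).
by rewrite ad_split evpartD ev0 ev1 addr0.
Qed.

Lemma odpart_ad x : odpart (ad x) = ad (P1 x).
Proof.
by apply: (addrI (evpart (ad x))); rewrite evpart_add_odpart evpart_ad -ad_split.
Qed.

Lemma ad_expand x y :
  ad x y = ad (P0 x) (P0 y) + ad (P0 x) (P1 y) + (ad (P1 x) (P0 y) + ad (P1 x) (P1 y)).
Proof. by rewrite -!linearD -adDl !P0_add_P1. Qed.

Lemma P0_ad x y : P0 (ad x y) = ad (P0 x) (P0 y) + ad (P1 x) (P1 y).
Proof.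
have x0 := P0_mem x; have x1 := P1_mem x; have y0 := P0_mem y; have y1 := P1_mem y.
rewrite ad_expand !linearD /= (P0_id (ad_par false false _ x0 y0)).
rewrite (P0_odd (ad_par false true _ x0 y1)) (P0_odd (ad_par true false _ x1 y0)).
by rewrite (P0_id (ad_par true true _ x1 y1)) addr0 add0r.
Qed.

Lemma P1_ad x y : P1 (ad x y) = ad (P0 x) (P1 y) + ad (P1 x) (P0 y).
Proof.
have x0 := P0_mem x; have x1 := P1_mem x; have y0 := P0_mem y; have y1 := P1_mem y.
rewrite ad_expand !linearD /= (P1_even (ad_par false false _ x0 y0)).
rewrite (P1_id (ad_par false true _ x0 y1)) (P1_id (ad_par true false _ x1 y0)).
by rewrite (P1_even (ad_par true true _ x1 y1)) addr0 add0r.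
Qed.

Lemma is_der_ad x : is_der V0 V1 ad (ad x).
Proof.
split; [rewrite evpart_ad | rewrite odpart_ad]; split.
- move=> a y; exact: (ad_par false a y (P0_mem x)).
- move=> a y z; exact: (ad_jacobi false a z (P0_mem x)).
- move=> a y; exact: (ad_par true a y (P1_mem x)).
- move=> a y z; exact: (ad_jacobi true a z (P1_mem x)).
Qed.

Lemma sbr_ad (D : 'End(V)) x : is_der V0 V1 ad D -> sbr V0 V1 D (ad x) = ad (D x).
Proof.
case=> [[_ Dev] [_ Dod]]; rewrite /sbr evpart_ad odpart_ad.
rewrite -[in RHS](evpart_add_odpart D) add_lfunE -[in RHS](P0_add_P1 x) !linearD /=.
move: (evpart D) (odpart D) Dev Dod => De Do Dev Dod.
have x0 : P0 x \in par V0 V1 false by apply: P0_mem.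
have x1 : P1 x \in par V0 V1 true by apply: P1_mem.
apply/lfunP => v; rewrite !add_lfunE !opp_lfunE !comp_lfunE.
rewrite (Dev false _ v x0) (Dev true _ v x1) (Dod false _ v x0) (Dod true _ v x1).
rewrite /sgn /= expr0 expr1 !scale1r scaleN1r !addrK subrK.
by rewrite !addrA.
Qed.

Definition bracketv (X A : {vspace V}) : {vspace V} :=
  (\sum_(i < \dim X) ad (vbasis X)`_i @: A)%VS.

Lemma memv_bracket (X A : {vspace V}) x a : x \in X -> a \in A -> ad x a \in bracketv X A.
Proof.
move=> xX aA; rewrite (coord_vbasis xX) ad_suml; apply: memv_sumr => i _.
by rewrite linearZ lfunE /= memvZ // memv_img.
Qed.

Lemma bracketvP (X A Y : {vspace V}) :
  reflect (forall x a, x \in X -> a \in A -> ad x a \in Y) (bracketv X A <= Y)%VS.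
Proof.
apply: (iffP idP) => [XA_Y x a xX aA | XA_Y].
  exact: subvP XA_Y _ (memv_bracket xX aA).
apply/subv_sumP => i _; apply/subvP => _ /memv_imgP[a aA ->].
by apply: XA_Y aA; apply: vbasis_mem; apply: mem_nth; rewrite size_tuple.
Qed.

Definition transporter (X B : {vspace V}) : {vspace V} :=
  (\bigcap_(i < \dim X) (ad (vbasis X)`_i @^-1: B))%VS.

Lemma transporterP (X B : {vspace V}) w :
  reflect (forall x, x \in X -> ad x w \in B) (w \in transporter X B).
Proof.
rewrite memvE; apply: (iffP subv_bigcapP) => [XwB x xX | XwB i _].
  rewrite (coord_vbasis xX) ad_suml; apply: rpred_sum => i _.
  by rewrite linearZ lfunE /= memvZ // memv_preim memvE XwB.
rewrite -memvE -memv_preim; apply: XwB.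
by apply: vbasis_mem; apply: mem_nth; rewrite size_tuple.
Qed.

Section Closure.
Variable X : {vspace V}.

(* The chain A <= A + [X, A] <= ... is stationary after \dim V steps. *)
Definition adclosure (A : {vspace V}) : {vspace V} :=
  iter (\dim {:V}).+1 (fun B => B + bracketv X B)%VS A.

Lemma sub_adclosure A : (A <= adclosure A)%VS.
Proof.
rewrite /adclosure; elim: (\dim {:V}).+1 => [|k IH] /=; first exact: subvv.
exact: subv_trans IH (addvSl _ _).
Qed.

Lemma adclosure_min A Y : (A <= Y)%VS -> (bracketv X Y <= Y)%VS -> (adclosure A <= Y)%VS.
Proof.
move=> AY XYY; rewrite /adclosure; elim: (\dim {:V}).+1 => [|k IH] //=.
rewrite subv_add IH /=; apply/bracketvP => x a xX aB.
by apply: (bracketvP _ _ _ XYY) xX (subvP IH a aB).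
Qed.

Lemma bracketv_adclosure A : (bracketv X (adclosure A) <= adclosure A)%VS.
Proof.
pose B k := iter k (fun B => B + bracketv X B)%VS A.
have dim_or_stable k : (k <= \dim (B k))%N || (bracketv X (B k) <= B k)%VS.
  elim: k => [|k IH] //; have [XBB | XBB] := boolP (bracketv X (B k) <= B k)%VS.
    have -> : B k.+1 = B k by apply/eqP; rewrite eqEsubv addvSl subv_add subvv XBB.
    by rewrite XBB orbT.
  have lt_dim : (\dim (B k) < \dim (B k.+1))%N.
    rewrite (ltn_leqif (dimv_leqif_eq (addvSl _ _))).
    by apply: contra XBB => /eqP {2}->; rewrite addvSr.
  by move: IH; rewrite (negPf XBB) orbF => IH; rewrite (leq_ltn_trans IH lt_dim).
by have := dim_or_stable (\dim {:V}).+1; rewrite ltnNge dimvS ?subvf.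
Qed.

End Closure.

Lemma parity_stable_transporter X B :
  parity_stable X -> parity_stable B -> parity_stable (transporter X B).
Proof.
move=> X_st B_st w /transporterP XwB; apply/transporterP => x xX.
rewrite -(P0_add_P1 x) adDl.
have -> : ad (P0 x) (P0 w) = P0 (ad (P0 x) w).
  by rewrite P0_ad (P0_id (P0_mem x)) (P1_even (P0_mem x)) ad0l addr0.
have -> : ad (P1 x) (P0 w) = P1 (ad (P1 x) w).
  by rewrite P1_ad (P0_odd (P1_mem x)) (P1_id (P1_mem x)) ad0l add0r.
by rewrite memvD ?B_st ?parity_stable_P1 ?XwB ?X_st ?parity_stable_P1.
Qed.

Lemma parity_stable_adclosure X A :
  parity_stable X -> parity_stable A -> parity_stable (adclosure X A).
Proof.
move=> X_st A_st; set C := adclosure X A.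
suff /subvP CC : (C <= C :&: P0 @^-1: C)%VS.
  by move=> w /CC; rewrite memv_cap -memv_preim => /andP[].
apply: adclosure_min.
  apply/subvP => a aA; rewrite memv_cap -memv_preim.
  by rewrite !(subvP (sub_adclosure X A)) ?A_st.
apply/bracketvP => x b xX; rewrite memv_cap -memv_preim => /andP[bC b0C].
have b1C : P1 b \in C by rewrite -(addKr (P0 b) (P1 b)) P0_add_P1 memvD ?memvN.
have XCC := bracketvP _ _ _ (bracketv_adclosure X A).
rewrite memv_cap -memv_preim P0_ad XCC //=.
by apply: memvD; apply: XCC => //; [apply: X_st | apply: parity_stable_P1].
Qed.

Hypothesis gr_par : forall p, gr p = (gr p :&: V0 + gr p :&: V1)%VS.
Hypothesis gr_ad : forall p q x y, x \in gr p -> y \in gr q -> ad x y \in gr (p + q).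

Lemma parity_stable_gr p : parity_stable (gr p).
Proof. exact/parity_stableP/gr_par. Qed.

Lemma P1_gr p v : v \in gr p -> P1 v \in gr p.
Proof. exact/parity_stable_P1/parity_stable_gr. Qed.

Lemma parity_stable_grpos : parity_stable grpos.
Proof.
move=> _ /memv_sumP[vs vs_gr ->]; rewrite linear_sum; apply: rpred_sum => i _.
exact: grpos_mem (parity_stable_gr (vs_gr i isT)).
Qed.

Lemma bracketv_grpos : (bracketv grpos grpos <= grpos)%VS.
Proof.
apply/bracketvP => _ _ /memv_sumP[xs xs_gr ->] /memv_sumP[ys ys_gr ->].
rewrite ad_suml; apply: rpred_sum => i _; rewrite linear_sum; apply: rpred_sum => j _.
by apply: grpos_mem (gr_ad (xs_gr i isT) (ys_gr j isT)).
Qed.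

Lemma derdeg_evpart p D : derdeg gr p D -> derdeg gr p (evpart D) /\ derdeg gr p (odpart D).
Proof.
move=> D_deg; split=> q v v_q; rewrite !add_lfunE !comp_lfunE; apply: memvD.
- exact/parity_stable_gr/D_deg/parity_stable_gr.
- exact/P1_gr/D_deg/P1_gr.
- exact/parity_stable_gr/D_deg/P1_gr.
- exact/P1_gr/D_deg/parity_stable_gr.
Qed.

Lemma evpart_vanish q (D : 'End(V)) : (forall v, v \in gr q -> D v = 0) ->
  (forall v, v \in gr q -> evpart D v = 0) /\ (forall v, v \in gr q -> odpart D v = 0).
Proof.
move=> D_q; split=> v v_q; rewrite !add_lfunE !comp_lfunE.
all: by rewrite !D_q ?linear0 ?addr0 ?P1_gr //; exact: parity_stable_gr.
Qed.

Lemma ad_derdeg q x : x \in gr q -> derdeg gr q (ad x).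
Proof. by move=> x_q r v v_r; rewrite addrC; apply: gr_ad. Qed.

Lemma hcomp_ad p x : hcomp p (ad x) = ad (grproj p x).
Proof.
rewrite -{1}(grproj_sum x) linear_sum hcomp_sum.
under eq_bigr do rewrite (hcomp_id _ (ad_derdeg (grproj_mem _ x))).
rewrite -[in RHS](grproj_sum x) !linear_sum; apply: eq_bigr => i _ /=.
by rewrite (grproj_id (grproj_mem _ x)) eq_sym; case: eqP; rewrite ?linear0.
Qed.

Lemma bracketv_neg_adclosure A : (bracketv (gr (-1)) A <= A)%VS ->
  (bracketv (gr (-1)) (adclosure grpos A) <= adclosure grpos A)%VS.
Proof.
(* Minimality: the c in C with [s^-1, c] <= C contain A and, by Jacobi, are s^{>=0}-stable. *)
move=> negA; set C := adclosure grpos A.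
have posC := bracketvP _ _ _ (bracketv_adclosure grpos A).
suff /subvP CT : (C <= C :&: transporter (gr (-1)) C)%VS.
  by apply/bracketvP => y c y_neg /CT; rewrite memv_cap => /andP[_ /transporterP]; apply.
apply: adclosure_min.
  apply/subvP => a aA; rewrite memv_cap (subvP (sub_adclosure _ _)) //=.
  apply/transporterP => y y_neg.
  exact: subvP (sub_adclosure _ _) _ (bracketvP _ _ _ negA _ _ y_neg aA).
apply/bracketvP => a c a_pos; rewrite memv_cap => /andP[cC /transporterP negc].
rewrite memv_cap posC //=; apply/transporterP => y y_neg.
have jacobi_mem y' a' : y' \in gr (-1) -> a' \in grpos ->
    (y' \in V0) || (y' \in V1) -> (a' \in V0) || (a' \in V1) -> ad y' (ad a' c) \in C.
  move=> y'_neg a'_pos /orP y'_par /orP a'_par.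
  have [i y'_i] : exists i, y' \in par V0 V1 i by case: y'_par; [exists false | exists true].
  have [j a'_j] : exists j, a' \in par V0 V1 j by case: a'_par; [exists false | exists true].
  rewrite (ad_jacobi i j c y'_i a'_j); apply: memvD; last exact/memvZ/posC/negc.
  have [u [t [u_neg t_pos ->]]] := gr_neg1_grpos_decomp (ad y' a').
  by rewrite adDl; apply: memvD; [apply: negc | apply: posC].
have y0 := parity_stable_gr y_neg; have y1 := P1_gr y_neg.
have a0 := parity_stable_grpos a_pos; have a1 := parity_stable_P1 parity_stable_grpos a_pos.
rewrite (ad_split y) (ad_split a) !add_lfunE !linearD /=.
by apply: memvD; apply: memvD; apply: jacobi_mem; rewrite ?P0_mem ?P1_mem ?orbT.
Qed.

Lemma graded_ideal_adclosure A : parity_stable A -> (bracketv (gr (-1)) A <= A)%VS ->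
  graded_ideal V0 V1 ad (adclosure grpos A).
Proof.
move=> A_st negA; split.
  by apply/parity_stableP/parity_stable_adclosure; [exact: parity_stable_grpos |].
move=> x c cC; have [u [t [u_neg t_pos ->]]] := gr_neg1_grpos_decomp x.
rewrite adDl; apply: memvD.
  exact: (bracketvP _ _ _ (bracketv_neg_adclosure negA)).
exact: (bracketvP _ _ _ (bracketv_adclosure _ _)).
Qed.

Lemma der_degree_inner (F : {vspace 'End(V)}) p x o : Zgraded gr F ->
  (forall D, D \in F -> derdeg gr p D -> D = 0) -> o \in F -> derdeg gr p (ad x + o) ->
  ad x + o = ad (grproj p x).
Proof.
move=> F_gr F_p oF D_deg; have := hcomp_id p D_deg; rewrite eqxx => <-.
by rewrite hcompD hcomp_ad (F_p _ (Zgraded_hcomp p F_gr oF) (hcomp_derdeg p o)) addr0.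
Qed.

Hypothesis ad_anti : forall a b x y, x \in par V0 V1 a -> y \in par V0 V1 b ->
  ad x y = - (sgn K a b *: ad y x).
Arguments ad_anti a b {x y}.
Hypothesis ad_simple : forall I, graded_ideal V0 V1 ad I -> I = 0%VS \/ I = fullv.
Hypothesis ad_nonabelian : exists x y, ad x y != 0.

Lemma lker_ad : lker ad = 0%VS.
Proof.
have ad_P_eq0 y : ad y = 0 -> ad (P0 y) = 0 /\ ad (P1 y) = 0.
  rewrite -evpart_ad -odpart_ad => ->.
  by apply: evpart_even => u _; rewrite lfunE mem0v.
have Z_ideal : graded_ideal V0 V1 ad (lker ad).
  split=> [|u y]; first by apply/parity_stableP => y; rewrite !memv_ker => /eqP /ad_P_eq0[-> _].
  rewrite !memv_ker => /eqP /ad_P_eq0[ady0 ady1].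
  rewrite ad_expand (ad_anti false false (P0_mem u) (P0_mem y)).
  rewrite (ad_anti false true (P0_mem u) (P1_mem y)) (ad_anti true false (P1_mem u) (P0_mem y)).
  rewrite (ad_anti true true (P1_mem u) (P1_mem y)) ady0 ady1 !lfunE /= !scaler0 oppr0.
  by rewrite !addr0 linear0.
have [// | Z_full] := ad_simple Z_ideal; have [x [y]] := ad_nonabelian.
have : x \in lker ad by rewrite Z_full memvf.
by rewrite memv_ker => /eqP ->; rewrite lfunE eqxx.
Qed.

Lemma ad_eq0 x : (ad x == 0) = (x == 0).
Proof. by rewrite -memv_ker lker_ad memv0. Qed.

Lemma neg_stable_dichotomy A Y : parity_stable A -> (bracketv (gr (-1)) A <= A)%VS ->
  (A <= Y)%VS -> (bracketv grpos Y <= Y)%VS -> A = 0%VS \/ Y = fullv.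
Proof.
move=> A_st negA AY posY; have AC := sub_adclosure grpos A.
have CY : (adclosure grpos A <= Y)%VS by apply: adclosure_min.
case: (ad_simple (graded_ideal_adclosure A_st negA)) => [C0 | C_full].
  by left; apply/eqP; rewrite -subv0 -C0.
by right; apply/eqP; rewrite eqEsubv subvf -C_full.
Qed.

Hypothesis gr_neg1_neq0 : gr (-1) != 0%VS.

Lemma grpos_transitive v : v \in grpos -> (forall y, y \in gr (-1) -> ad y v = 0) -> v = 0.
Proof.
move=> v_pos v_ker; set A := (grpos :&: transporter (gr (-1)) 0)%VS.
have vA : v \in A.
  by rewrite memv_cap v_pos; apply/transporterP => y /v_ker ->; rewrite mem0v.
have A_st : parity_stable A.
  apply: parity_stable_cap parity_stable_grpos _.
  exact: parity_stable_transporter (parity_stable_gr (p := -1)) parity_stable0.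
have negA : (bracketv (gr (-1)) A <= A)%VS.
  apply/bracketvP => y w y_neg; rewrite memv_cap => /andP[_ /transporterP /(_ y y_neg)].
  by rewrite memv0 => /eqP ->; rewrite mem0v.
case: (neg_stable_dichotomy A_st negA (capvSl _ _) bracketv_grpos) => [A0 | pos_full].
  by move: vA; rewrite A0 memv0 => /eqP.
by move: gr_neg1_neq0; rewrite -(capvf (gr (-1))) -pos_full gr_neg1_cap_grpos eqxx.
Qed.

Lemma gr_neg1_irreducible U : (U <= gr (-1))%VS -> parity_stable U ->
  (bracketv (gr 0) U <= U)%VS -> U = 0%VS \/ U = gr (-1).
Proof.
move=> U_neg U_st zeroU.
have negU : (bracketv (gr (-1)) U <= U)%VS.
  apply/bracketvP => y u y_neg /(subvP U_neg) u_neg.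
  by have := gr_ad y_neg u_neg; rewrite gr_lt_neg1 // memv0 => /eqP ->; rewrite mem0v.
have posY : (bracketv grpos (U + grpos) <= U + grpos)%VS.
  apply/bracketvP => _ w /memv_sumP[xs xs_gr ->] /memv_addP[u uU [t t_pos ->]].
  rewrite linearD /=; apply: memvD; last first.
    apply: (subvP (addvSr _ _)); apply: (bracketvP _ _ _ bracketv_grpos) t_pos.
    by apply: rpred_sum => i _; apply: grpos_mem (xs_gr i isT).
  rewrite ad_suml; apply: rpred_sum => i _.
  have [i0 | i_gt0] := eqVneq (nat_of_ord i) 0%N.
    apply: (subvP (addvSl _ _)); apply: (bracketvP _ _ _ zeroU) uU.
    by move: (xs_gr i isT); rewrite i0.
  apply: (subvP (addvSr _ _)); apply: grpos_mem (gr_ad (xs_gr i isT) (subvP U_neg _ uU)).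
  by move: i_gt0; lia.
case: (neg_stable_dichotomy U_st negU (addvSl U grpos) posY) => [-> | Y_full]; [by left | right].
apply/eqP; rewrite eqEsubv U_neg; apply/subvP => v v_neg.
have /memv_addP[u uU [t t_pos def_v]] : v \in (U + grpos)%VS by rewrite Y_full memvf.
have t_eq : t = v - u by rewrite def_v addrC addKr.
have : t \in (gr (-1) :&: grpos)%VS by rewrite memv_cap t_pos t_eq memvB // (subvP U_neg).
by rewrite gr_neg1_cap_grpos memv0 def_v => /eqP ->; rewrite addr0.
Qed.

Lemma gr1_neq0 : gr 1 != 0%VS.
Proof.
apply/eqP => gr1_0.
have gr_gt0 (k : nat) : gr k.+1%:Z = 0%VS.
  elim: k => [// | k IH]; apply/eqP; rewrite -subv0; apply/subvP => v v_k; rewrite memv0.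
  apply/eqP/grpos_transitive; first exact: grpos_mem v_k.
  move=> y y_neg; have := gr_ad y_neg v_k.
  by rewrite (_ : -1 + _ = k.+1%:Z) ?IH ?memv0 => [/eqP // |]; lia.
have neg_ideal : graded_ideal V0 V1 ad (gr (-1)).
  split=> [|x y y_neg]; first exact: gr_par.
  have [u [t [u_neg /memv_sumP[ts ts_gr ->] ->]]] := gr_neg1_grpos_decomp x.
  rewrite adDl; apply: memvD.
    by have := gr_ad u_neg y_neg; rewrite gr_lt_neg1 // memv0 => /eqP ->; rewrite mem0v.
  rewrite ad_suml; apply: rpred_sum => i _.
  have [i0 | i_gt0] := eqVneq (nat_of_ord i) 0%N.
    by have := gr_ad (ts_gr i isT) y_neg; rewrite i0 add0r.
  have i_eq : (nat_of_ord i)%:Z = (i.-1).+1%:Z by rewrite prednK // lt0n.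
  by move: (ts_gr i isT); rewrite i_eq gr_gt0 memv0 => /eqP ->; rewrite ad0l mem0v.
case: (ad_simple neg_ideal) => [neg0 | neg_full]; first by move/eqP: gr_neg1_neq0.
have [x [y]] := ad_nonabelian; have := @gr_ad (-1) (-1) x y.
by rewrite neg_full !memvf gr_lt_neg1 // memv0 => /(_ isT isT) ->.
Qed.

Lemma superder_transitive c E p : superder V0 V1 ad c E -> derdeg gr p E -> 0 <= p ->
  (forall y, y \in gr (-1) -> E y = 0) -> E = 0.
Proof.
move=> [_ E_der] E_deg p_ge0 E_neg.
have E_gr (k : nat) v : v \in gr (k%:Z - 1) -> E v = 0.
  elim: k v => [|k IH] v; first exact: E_neg.
  rewrite (_ : k.+1%:Z - 1 = k%:Z); last by lia.
  move=> v_k; apply: grpos_transitive; first by apply: grpos_mem (E_deg _ _ v_k); lia.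
  have E_bracket a y : y \in par V0 V1 a -> y \in gr (-1) -> ad y (E v) = 0.
    move=> y_a y_neg; have := E_der a y v y_a.
    have ady_v : ad y v \in gr (k%:Z - 1) by rewrite addrC; apply: gr_ad.
    rewrite (E_neg _ y_neg) (IH _ ady_v) ad0l add0r => /esym/eqP.
    by rewrite scaler_eq0 (negPf (sgn_neq0 _ _)) => /eqP.
  move=> y y_neg; rewrite (ad_split y) add_lfunE.
  rewrite (E_bracket false) ?(E_bracket true) ?addr0 ?P0_mem ?P1_mem //.
    exact: P1_gr.
  exact: parity_stable_gr.
apply/lfunP => v; rewrite lfunE /=.
have [u [t [u_neg /memv_sumP[ts ts_gr ->] ->]]] := gr_neg1_grpos_decomp v.
rewrite linearD /= E_neg // add0r linear_sum big1 // => i _.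
by apply: (E_gr i.+1); rewrite (_ : i.+1%:Z - 1 = i%:Z) ?ts_gr //; lia.
Qed.

Lemma der_transitive D p : is_der V0 V1 ad D -> derdeg gr p D -> 0 <= p ->
  (forall y, y \in gr (-1) -> D y = 0) -> D = 0.
Proof.
move=> [D_ev D_od] D_deg p_ge0 /evpart_vanish[ev_neg od_neg].
have [ev_deg od_deg] := derdeg_evpart D_deg.
rewrite -(evpart_add_odpart D) (superder_transitive D_ev ev_deg) //.
by rewrite (superder_transitive D_od od_deg) // addr0.
Qed.

Variables out g : {vspace 'End(V)}.
Hypotheses (der_out : forall D, is_der V0 V1 ad D <-> exists x o, o \in out /\ D = ad x + o)
  (ad_cap_out : (limg ad :&: out = 0)%VS) (out_graded : graded_subalg V0 V1 gr out)
  (ad_sub_g : (limg ad <= g)%VS) (g_der : forall D, D \in g -> is_der V0 V1 ad D)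
  (g_graded : graded_subalg V0 V1 gr g).

Lemma ad_in_g x : ad x \in g.
Proof. exact/(subvP ad_sub_g)/memv_img/memvf. Qed.

Lemma der_subalg_decomp D : D \in g -> exists x o, o \in (g :&: out)%VS /\ D = ad x + o.
Proof.
move=> Dg; have [x [o [o_out def_D]]] := (der_out D).1 (g_der Dg).
exists x, o; split=> //; rewrite memv_cap o_out andbT.
by rewrite (canRL (addKr (ad x)) (esym def_D)); apply: memvD; rewrite ?memvN ?ad_in_g.
Qed.

Lemma semidirect_decomposition :
  (limg ad + (g :&: out) = g)%VS /\ directv (limg ad + (g :&: out)).
Proof.
split; last by apply/directv_addP/eqP; rewrite -subv0 -ad_cap_out capvS ?capvSr.
apply/eqP; rewrite eqEsubv subv_add ad_sub_g capvSl /=; apply/subvP => D Dg.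
by have [x [o [oF ->]]] := der_subalg_decomp Dg; apply/memv_add/oF/memv_img/memvf.
Qed.

Lemma der_subalg_transitive : transitive_sub V0 V1 gr g.
Proof.
move=> p D p_ge0 Dg D_deg D_neg; apply: (der_transitive (g_der Dg) D_deg p_ge0) => y y_neg.
apply/eqP; rewrite -ad_eq0 -(sbr_ad _ (g_der Dg)) (D_neg (ad y)) ?eqxx ?ad_in_g //.
exact: ad_derdeg.
Qed.

Lemma der_subalg_nonlinear : nonlinear_sub gr g.
Proof.
exists (ad (vpick (gr 1))); split; [exact: ad_in_g | exact/ad_derdeg/memv_pick |].
by rewrite ad_eq0 vpick0 gr1_neq0.
Qed.

Lemma der_subalg_neg1 : exists D, [/\ D \in g, derdeg gr (-1) D & D != 0].
Proof.
exists (ad (vpick (gr (-1)))); split; [exact: ad_in_g | exact/ad_derdeg/memv_pick |].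
by rewrite ad_eq0 vpick0.
Qed.

Lemma depth_nonpos_out : depth_one_sub gr g -> irreducible_sub V0 V1 gr g ->
  depth_nonpos (g :&: out).
Proof.
move=> [g_depth _] [_ g_irr] p D p_lt0; rewrite memv_cap => /andP[Dg Dout] D_deg.
have [p_lt | p_ge] := ltrP p (-1); first exact: g_depth D_deg.
have p_eq : p = -1 by lia.
subst p; pose W := (ad @: gr (-1))%VS.
have W_sub D' : D' \in W -> D' \in g /\ derdeg gr (-1) D'.
  by case/memv_imgP => u u_neg ->; split; [exact: ad_in_g | exact: ad_derdeg].
have W_ev : Z2graded V0 V1 W.
  by move=> _ /memv_imgP[u u_neg ->]; rewrite evpart_ad; apply: memv_img; exact: parity_stable_gr.
have W_st X D' : X \in g -> derdeg gr 0 X -> D' \in W -> sbr V0 V1 X D' \in W.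
  move=> Xg X_deg /memv_imgP[u u_neg ->]; rewrite (sbr_ad _ (g_der Xg)); apply: memv_img.
  by have := X_deg _ _ u_neg; rewrite addr0.
case: (g_irr W W_sub W_ev W_st) => [W0 | W_all].
  have : ad (vpick (gr (-1))) \in W by apply: memv_img; apply: memv_pick.
  by rewrite W0 memv0 ad_eq0 vpick0 (negPf gr_neg1_neq0).
have /memv_imgP[u _ def_D] := W_all D Dg D_deg.
by apply/eqP; rewrite -memv0 -ad_cap_out memv_cap Dout andbT def_D; apply/memv_img/memvf.
Qed.

Lemma neg_der_inner p D : depth_nonpos (g :&: out) -> p < 0 -> D \in g -> derdeg gr p D ->
  exists y, y \in gr p /\ D = ad y.
Proof.
move=> F_nonpos p_lt0 Dg D_deg; have [x [o [oF def_D]]] := der_subalg_decomp Dg.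
have [_ F_gr _] := graded_subalg_cap g_graded out_graded.
exists (grproj p x); split; first exact: grproj_mem.
by rewrite def_D (der_degree_inner F_gr (F_nonpos p ^~ p_lt0) oF) -?def_D.
Qed.

Lemma depth_one_of_nonpos : depth_nonpos (g :&: out) -> depth_one_sub gr g.
Proof.
move=> F_nonpos; split; last exact: der_subalg_neg1.
move=> p D p_lt Dg D_deg; have [|y [y_p ->]] := neg_der_inner F_nonpos _ Dg D_deg.
  by move: p_lt; lia.
by move: y_p; rewrite gr_lt_neg1 // memv0 => /eqP ->; rewrite linear0.
Qed.

Lemma irreducible_of_nonpos : depth_nonpos (g :&: out) -> irreducible_sub V0 V1 gr g.
Proof.
move=> F_nonpos; split=> [|W W_sub W_ev W_st]; first exact: der_subalg_neg1.
pose U := (gr (-1) :&: ad @^-1: W)%VS.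
have U_st : parity_stable U.
  move=> u; rewrite !memv_cap -!memv_preim => /andP[u_neg adu_W].
  by rewrite parity_stable_gr //= -evpart_ad W_ev.
have zeroU : (bracketv (gr 0) U <= U)%VS.
  apply/bracketvP => y u y_0; rewrite !memv_cap -!memv_preim => /andP[u_neg adu_W].
  have := gr_ad y_0 u_neg; rewrite add0r => -> /=.
  by rewrite -(sbr_ad u (is_der_ad y)) W_st ?ad_in_g //; exact: ad_derdeg.
have neg_inner D : D \in W -> exists y, y \in U /\ D = ad y.
  move=> DW; have [Dg D_deg] := W_sub D DW.
  have [y [y_neg def_D]] := neg_der_inner F_nonpos (ltrN10 _) Dg D_deg.
  by exists y; rewrite memv_cap y_neg -memv_preim -def_D.
case: (gr_neg1_irreducible (U := U) (capvSl _ _) U_st zeroU) => [U0 | U_all]; [left | right].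
  apply/eqP; rewrite -subv0; apply/subvP => D /neg_inner[y [yU ->]].
  by move: yU; rewrite U0 memv0 => /eqP ->; rewrite linear0 mem0v.
move=> D Dg D_deg; have [y [y_neg ->]] := neg_der_inner F_nonpos (ltrN10 _) Dg D_deg.
by move: y_neg; rewrite -U_all memv_cap -memv_preim => /andP[].
Qed.

End GradedLieSuperalgebra.

Theorem proposition3p11 (R : realType) (V : vectType R[i])
  (V0 V1 : {vspace V}) (ad : 'Hom(V, 'End(V))) (gr : int -> {vspace V})
  (out g : {vspace 'End(V)}) :
  simple_lie_superalgebra V0 V1 ad ->
  Zgrading V0 V1 ad gr ->
  depth_one_grading gr ->
  outer_complement V0 V1 ad gr out ->
  (limg ad <= g)%VS ->
  (forall D, D \in g -> is_der V0 V1 ad D) ->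
  graded_subalg V0 V1 gr g ->
  [/\ (limg ad + (g :&: out) = g)%VS /\ directv (limg ad + (g :&: out))%VS,
      graded_subalg V0 V1 gr (g :&: out)%VS,
      transitive_sub V0 V1 gr g,
      nonlinear_sub gr g &
      (depth_one_sub gr g /\ irreducible_sub V0 V1 gr g <->
        forall p D, p < 0 -> D \in (g :&: out)%VS -> derdeg gr p D -> D = 0)].
Proof.
move=> [[V01_direct V01_full ad_par ad_anti ad_jacobi] ad_nonabelian ad_simple]
  [[N [gr_bound gr_sum gr_direct]] gr_par gr_ad] [gr_lt_neg1 gr_neg1_neq0]
  [der_out ad_cap_out out_graded] ad_sub_g g_der g_graded.
split.
- exact: (semidirect_decomposition der_out ad_cap_out ad_sub_g g_der).
- exact: (graded_subalg_cap gr_bound gr_sum gr_direct g_graded out_graded).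
- exact: (der_subalg_transitive gr_bound gr_sum gr_direct gr_lt_neg1 V01_direct V01_full
    ad_par ad_jacobi gr_par gr_ad ad_anti ad_simple ad_nonabelian gr_neg1_neq0 ad_sub_g g_der).
- exact: (der_subalg_nonlinear gr_bound gr_sum gr_direct gr_lt_neg1 V01_direct V01_full
    ad_par ad_jacobi gr_par gr_ad ad_anti ad_simple ad_nonabelian gr_neg1_neq0 ad_sub_g).
split=> [[depth_one irreducible] | out_nonpos].
  exact: (depth_nonpos_out gr_direct V01_direct V01_full ad_par gr_par gr_ad ad_anti ad_simple
    ad_nonabelian gr_neg1_neq0 ad_cap_out ad_sub_g g_der depth_one irreducible).
split.
  exact: (depth_one_of_nonpos gr_bound gr_sum gr_direct gr_lt_neg1 V01_direct V01_full
    ad_par gr_ad ad_anti ad_simple ad_nonabelian gr_neg1_neq0 der_out out_graded ad_sub_g g_der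
    g_graded out_nonpos).
exact: (irreducible_of_nonpos gr_bound gr_sum gr_direct gr_lt_neg1 V01_direct V01_full
  ad_par ad_jacobi gr_par gr_ad ad_anti ad_simple ad_nonabelian gr_neg1_neq0 der_out out_graded
  ad_sub_g g_der g_graded out_nonpos).
Qed.
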